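(* Under the hypotheses of Theorem 1, and assuming moreover $W_u[0]>\tau/(1-\sigma f)$, with the user following $\pi_u$ and the adversary following $\pi_a$ in a game with unboundedly many epochs, the fraction of user MEV transactions that are front-run during epoch $e$, namely $$\frac{\lfloor \tilde W_a[e-1]/y\rfloor}{\lceil (\tilde W_u[e-1]-\tau)/y\rceil},$$ tends to $0$ as $e\to\infty$.
   Context: Token game (Masquerade model). Discrete rounds; a user and an adversary with initial wealths $W_u[0]$, $W_a[0]$; token cost $y>0$, MEV profit $\eta>0$, front-run fraction $f\in(0,1)$, user threshold $\tau>0$. Tokens cost $y$, have numbers increasing in purchase order, never expire, are single-use, and are refunded $y$ when used. Each round the user makes at most one tokenized MEV transaction with token $T_u$; it is front-run iff the adversary uses a token $T_a<T_u$; front-run: user earns $\eta-f\eta$, adversary $f\eta$; otherwise user earns $\eta$, adversary $0$. User policy $\pi_u$: each round buy one token if available wealth exceeds $y$; if available wealth $\le\tau$, make a tokenized MEV transaction with its lowest unused token. Adversary policy $\pi_a$: knows the user's tokens; each round buys $\lfloor (\text{available wealth})/y\rfloor$ tokens, purchases ordered before the user's; front-runs each user transaction with its largest unused token below $T_u$ if one exists. Epochs: the first ends when the user's available wealth drops below $\tau$; each later epoch ends once the user has used all tokens bought in the previous epoch and its available wealth drops below $\tau$. During epoch $e$ the user makes $\lceil (\tilde W_u[e-1]-\tau)/y\rceil$ MEV transactions and the adversary front-runs $\lfloor \tilde W_a[e-1]/y\rfloor$ of them. $\tilde W_a[e]$, $\tilde W_u[e]$: total wealth (available plus locked in tokens)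 at end of epoch $e$, with $\tilde W_a[0]=W_a[0]$, $\tilde W_u[0]=W_u[0]$. Theorem 1 hypotheses: $0<\sigma<1/2$, $\epsilon<\frac{yf+f^2\eta}{\eta(1-f)}$, $W_a[0]<\sigma W_u[0]$, $f<\frac{1-\sigma-\epsilon}{1+\sigma}$, $W_a[0]>\frac{y^2}{\eta\epsilon}$, $\tau<\epsilon W_u[0]$. *)

From Stdlib Require Import Reals.
Open Scope R_scope.

(* floor and ceiling on R. Int_part r = up r - 1 is the floor of r. *)
Definition Rfloor (x : R) : R := IZR (Int_part x).
Definition Rceil (x : R) : R := - Rfloor (- x).

(* Number of MEV transactions the user makes during an epoch that starts with
   user total wealth wu:  ceil ((wu - tau) / y). *)
Definition n_user (y tau wu : R) : R := Rceil ((wu - tau) / y).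
(* Number of those that the adversary front-runs, given adversary total
   wealth wa at the start of the epoch:  floor (wa / y). *)
Definition n_adv (y wa : R) : R := Rfloor (wa / y).

(* Tokens are refunded when used, so total wealth only changes
   through MEV profits: each front-run gives the adversary f*eta and the user
   eta - f*eta; each non-front-run transaction gives the user eta. *)
Fixpoint wealth (y eta f tau Wu0 Wa0 : R) (e : nat) : R * R :=
  match e with
  | O => (Wu0, Wa0)
  | S e' =>
      let (wu, wa) := wealth y eta f tau Wu0 Wa0 e' in
      let nu := n_user y tau wu in
      let na := n_adv y wa in
      (wu + (nu - na) * eta + na * (eta - f * eta), wa + na * (f * eta))
  end.

Definition Wu_t (y eta f tau Wu0 Wa0 : R) (e : nat) : R :=
  fst (wealth y eta f tau Wu0 Wa0 e).
Definition Wa_t (y eta f tau Wu0 Wa0 : R) (e : nat) : R :=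
  snd (wealth y eta f tau Wu0 Wa0 e).

Definition frontrun_fraction (y eta f tau Wu0 Wa0 : R) (e : nat) : R :=
  n_adv y (Wa_t y eta f tau Wu0 Wa0 (e - 1))
  / n_user y tau (Wu_t y eta f tau Wu0 Wa0 (e - 1)).

(* Write K = eta / y.  In one epoch the adversary spends at most its wealth
   wa on tokens, so its wealth grows at most by the factor a = 1 + f K.  The
   user makes at least (wu - tau)/y > (1 - eps) wu / y transactions and loses
   at most f K sigma wu to front-running, so its wealth grows at least by the
   factor b = 1 + K (1 - f sigma - eps).  Both estimates need the invariant
   wa <= sigma wu, which is preserved because f (1 + sigma) < 1 - sigma - eps.
   Hence W~_a[e] <= a^e W_a[0] and W~_u[e] >= b^e W_u[0], and the front-run
   fraction is at most C (a/b)^(e-1) with a < b, which tends to 0. *)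
From Stdlib Require Import Reals Lra Lia Psatz.
Open Scope R_scope.

Lemma Rdiv_nonneg (p q : R) : 0 <= p -> 0 < q -> 0 <= p / q.
Proof. intros Hp Hq. apply Rmult_le_pos; [lra | apply Rlt_le, Rinv_0_lt_compat; lra]. Qed.

Lemma Rdiv_le_compat (p1 p2 q1 q2 : R) :
  0 <= p1 <= p2 -> 0 < q2 <= q1 -> p1 / q1 <= p2 / q2.
Proof.
  intros Hp Hq. unfold Rdiv.
  apply Rmult_le_compat; try lra.
  - left. apply Rinv_0_lt_compat. lra.
  - apply Rinv_le_contravar; lra.
Qed.

Lemma Rfloor_le (x : R) : Rfloor x <= x.
Proof. unfold Rfloor. destruct (base_Int_part x); lra. Qed.

Lemma Rfloor_gt (x : R) : x - 1 < Rfloor x.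
Proof. unfold Rfloor. destruct (base_Int_part x); lra. Qed.

Lemma Rceil_ge (x : R) : x <= Rceil x.
Proof. unfold Rceil. pose proof (Rfloor_le (- x)). lra. Qed.

(* The floor of a nonnegative real is nonnegative (it is an integer > -1). *)
Lemma Rfloor_nonneg (x : R) : 0 <= x -> 0 <= Rfloor x.
Proof.
  intro Hx. pose proof (Rfloor_gt x) as Hgt. unfold Rfloor in *.
  assert (Hint : (-1 < Int_part x)%Z) by (apply lt_IZR; simpl; lra).
  apply IZR_le. lia.
Qed.

Lemma n_user_spend (y tau wu : R) : 0 < y -> wu - tau <= n_user y tau wu * y.
Proof.
  intro Hy. unfold n_user. pose proof (Rceil_ge ((wu - tau) / y)) as H.
  apply Rmult_le_compat_r with (r := y) in H; [|lra].
  replace ((wu - tau) / y * y) with (wu - tau) in H by (field; lra). lra.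
Qed.

Lemma n_adv_spend (y wa : R) :
  0 < y -> 0 <= wa -> 0 <= n_adv y wa /\ n_adv y wa * y <= wa.
Proof.
  intros Hy Hwa. unfold n_adv. split.
  - apply Rfloor_nonneg, Rdiv_nonneg; lra.
  - pose proof (Rfloor_le (wa / y)) as H.
    apply Rmult_le_compat_r with (r := y) in H; [|lra].
    replace (wa / y * y) with wa in H by (field; lra). lra.
Qed.

Lemma Wu_t_S (y eta f tau Wu0 Wa0 : R) (e : nat) :
  let wu := Wu_t y eta f tau Wu0 Wa0 e in
  let wa := Wa_t y eta f tau Wu0 Wa0 e in
  Wu_t y eta f tau Wu0 Wa0 (S e) =
  wu + (n_user y tau wu - n_adv y wa) * eta + n_adv y wa * (eta - f * eta).
Proof. unfold Wu_t, Wa_t; simpl; destruct (wealth y eta f tau Wu0 Wa0 e); reflexivity. Qed.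

Lemma Wa_t_S (y eta f tau Wu0 Wa0 : R) (e : nat) :
  let wa := Wa_t y eta f tau Wu0 Wa0 e in
  Wa_t y eta f tau Wu0 Wa0 (S e) = wa + n_adv y wa * (f * eta).
Proof. unfold Wu_t, Wa_t; simpl; destruct (wealth y eta f tau Wu0 Wa0 e); reflexivity. Qed.

Section Epoch.

Variables y eta f sigma eps tau : R.
Hypothesis Hy : 0 < y.
Hypothesis Heta : 0 < eta.
Hypothesis Hf : 0 < f < 1.
Hypothesis Hsigma : 0 < sigma.
(* The rate condition of Theorem 1, cleared of its denominator. *)
Hypothesis Hrate : f * (1 + sigma) < 1 - sigma - eps.

Let a : R := 1 + f * eta / y.
Let b : R := 1 + eta / y * (1 - f * sigma - eps).

Lemma growth_factors : 1 <= a < b.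
Proof.
  assert (HK : 0 < eta / y) by (apply Rdiv_lt_0_compat; lra).
  unfold a, b. split; nra.
Qed.

Variables wu wa nu na : R.
Hypothesis Hwa : 0 <= wa <= sigma * wu.
Hypothesis Htau : tau < eps * wu.
Hypothesis Hnu : wu - tau <= nu * y.
Hypothesis Hna : 0 <= na.
Hypothesis Hspent : na * y <= wa.

Let wu' : R := wu + (nu - na) * eta + na * (eta - f * eta).
Let wa' : R := wa + na * (f * eta).

(* Spending expressed in wealth units: the epoch moves eta/y per unit spent. *)
Let K : R := eta / y.
Let wu'_spend : wu' = wu + K * (nu * y) - f * K * (na * y).
Proof. unfold wu', K. field. lra. Qed.
Let wa'_spend : wa' = wa + f * K * (na * y).
Proof. unfold wa', K. field. lra. Qed.
Let K_pos : 0 < K.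
Proof. apply Rdiv_lt_0_compat; lra. Qed.
Let spent_nonneg : 0 <= na * y.
Proof. nra. Qed.

(* The adversary gains f K per unit spent and spends at most wa. *)
Lemma adv_epoch_growth : 0 <= wa' <= a * wa.
Proof.
  replace a with (1 + f * K) by (unfold a, K; field; lra).
  assert (HfK : 0 < f * K) by nra.
  rewrite wa'_spend. split; nra.
Qed.

(* The user gains K per unit of wealth spent on tokens, minus the front-run
   share f K per unit the adversary spends. *)
Lemma user_epoch_growth : b * wu <= wu'.
Proof.
  replace b with (1 + K * (1 - f * sigma - eps)) by (unfold b, K; field; lra).
  rewrite wu'_spend.
  assert (Hfront : f * (na * y) <= f * sigma * wu) by nra.
  assert (Hgain : (1 - f * sigma - eps) * wu <= nu * y - f * (na * y)) by nra.
  nra.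
Qed.

(* The adversary's share of wealth stays below sigma: its gain f K A is
   dominated by sigma times the user's net gain, as f (1 + sigma) A is at
   most sigma (wu - tau), hence at most sigma times the user's spending. *)
Lemma ratio_epoch_invariant : wa' <= sigma * wu'.
Proof.
  rewrite wa'_spend, wu'_spend.
  assert (Hwu : 0 <= wu) by nra.
  assert (Hf1 : 0 <= f * (1 + sigma)) by nra.
  assert (Hadv : f * (1 + sigma) * (na * y) <= f * (1 + sigma) * (sigma * wu))
    by (apply Rmult_le_compat_l; lra).
  assert (Huser : f * (1 + sigma) * (sigma * wu) <= sigma * (wu - tau)) by nra.
  assert (Hfront : f * (1 + sigma) * (na * y) <= sigma * (nu * y)) by nra.
  assert (HKfront : K * (f * (1 + sigma) * (na * y)) <= K * (sigma * (nu * y))) by nra.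
  nra.
Qed.

End Epoch.

Section Dynamics.

Variables y eta f sigma eps tau Wu0 Wa0 : R.
Hypothesis Hy : 0 < y.
Hypothesis Heta : 0 < eta.
Hypothesis Hf : 0 < f < 1.
Hypothesis Hsigma : 0 < sigma.
Hypothesis Heps : 0 < eps.
Hypothesis Hrate : f * (1 + sigma) < 1 - sigma - eps.
Hypothesis HWu0 : 0 < Wu0.
Hypothesis HWa0 : 0 <= Wa0 <= sigma * Wu0.
Hypothesis Htau : tau < eps * Wu0.

Let a : R := 1 + f * eta / y.
Let b : R := 1 + eta / y * (1 - f * sigma - eps).
Let Wu : nat -> R := Wu_t y eta f tau Wu0 Wa0.
Let Wa : nat -> R := Wa_t y eta f tau Wu0 Wa0.

(* A user wealth that has grown geometrically from W_u[0] stays above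
   tau / eps, so every epoch sees at least (1 - eps) wu / y transactions. *)
Lemma tau_below_user_wealth (e : nat) (w : R) : b ^ e * Wu0 <= w -> tau < eps * w.
Proof.
  intro Hw.
  destruct (growth_factors y eta f sigma eps Hy Heta Hf Hsigma Hrate) as [Ha Hab].
  fold a b in Ha, Hab.
  assert (Hbe : 1 <= b ^ e) by (apply pow_R1_Rle; lra).
  assert (Hgrow : Wu0 <= b ^ e * Wu0)
    by (rewrite <- (Rmult_1_l Wu0) at 1; apply Rmult_le_compat_r; lra).
  assert (Hmono : eps * Wu0 <= eps * w) by (apply Rmult_le_compat_l; lra).
  lra.
Qed.

Lemma wealth_invariant (e : nat) :
  0 <= Wa e <= sigma * Wu e /\ Wa e <= a ^ e * Wa0 /\ b ^ e * Wu0 <= Wu e.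
Proof.
  destruct (growth_factors y eta f sigma eps Hy Heta Hf Hsigma Hrate) as [Ha Hab].
  fold a b in Ha, Hab.
  induction e as [|e IH].
  - unfold Wa, Wu, Wa_t, Wu_t; simpl. lra.
  - destruct IH as [Hshare [Hadv Huser]].
    pose proof (tau_below_user_wealth e (Wu e) Huser) as Htau_e.
    pose proof (n_user_spend y tau (Wu e) Hy) as Hnu.
    destruct (n_adv_spend y (Wa e) Hy (proj1 Hshare)) as [Hna Hspent].
    pose proof (adv_epoch_growth y eta f sigma Hy Heta Hf
                  (Wu e) (Wa e) (n_adv y (Wa e)) Hshare Hna Hspent) as Gadv.
    pose proof (user_epoch_growth y eta f sigma eps tau Hy Heta Hf
                  (Wu e) (Wa e) (n_user y tau (Wu e)) (n_adv y (Wa e))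
                  Hshare Htau_e Hnu Hspent) as Guser.
    pose proof (ratio_epoch_invariant y eta f sigma eps tau Hy Heta Hf Hsigma Hrate
                  (Wu e) (Wa e) (n_user y tau (Wu e)) (n_adv y (Wa e))
                  Hshare Htau_e Hnu Hna Hspent) as Gshare.
    fold a in Gadv. fold b in Guser.
    assert (Hadv' : a * Wa e <= a * (a ^ e * Wa0)) by (apply Rmult_le_compat_l; lra).
    assert (Huser' : b * (b ^ e * Wu0) <= b * Wu e) by (apply Rmult_le_compat_l; lra).
    unfold Wu, Wa in *. rewrite Wu_t_S, Wa_t_S. simpl.
    repeat split; lra.
Qed.

Lemma frontrun_fraction_bound (e : nat) :
  0 <= frontrun_fraction y eta f tau Wu0 Wa0 e
    <= Wa0 / (Wu0 * (1 - eps)) * (a / b) ^ (e - 1).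
Proof.
  destruct (growth_factors y eta f sigma eps Hy Heta Hf Hsigma Hrate) as [Ha Hab].
  fold a b in Ha, Hab.
  unfold frontrun_fraction. fold Wu Wa. set (k := (e - 1)%nat).
  destruct (wealth_invariant k) as [Hshare [Hadv Huser]].
  destruct (n_adv_spend y (Wa k) Hy (proj1 Hshare)) as [Hna Hspent].
  pose proof (n_user_spend y tau (Wu k) Hy) as Hnu.
  assert (Hbk : 1 <= b ^ k) by (apply pow_R1_Rle; lra).
  assert (Hak : 0 < a ^ k) by (apply pow_lt; lra).
  assert (Heps1 : eps < 1) by nra.
  pose proof (tau_below_user_wealth k (Wu k) Huser) as Htau_k.
  assert (Hna_le : n_adv y (Wa k) <= a ^ k * Wa0 / y).
  { apply Rmult_le_reg_r with y; [lra|].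
    replace (a ^ k * Wa0 / y * y) with (a ^ k * Wa0) by (field; lra). lra. }
  assert (Hnu_ge : (1 - eps) * (b ^ k * Wu0) / y <= n_user y tau (Wu k)).
  { apply Rmult_le_reg_r with y; [lra|].
    replace ((1 - eps) * (b ^ k * Wu0) / y * y) with ((1 - eps) * (b ^ k * Wu0))
      by (field; lra).
    assert (Hmono : (1 - eps) * (b ^ k * Wu0) <= (1 - eps) * Wu k)
      by (apply Rmult_le_compat_l; lra).
    lra. }
  assert (Hq : 0 < (1 - eps) * (b ^ k * Wu0) / y)
    by (apply Rdiv_lt_0_compat; [apply Rmult_lt_0_compat; nra | lra]).
  replace (Wa0 / (Wu0 * (1 - eps)) * (a / b) ^ k)
    with ((a ^ k * Wa0 / y) / ((1 - eps) * (b ^ k * Wu0) / y))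
    by (unfold Rdiv; rewrite Rpow_mult_distr, pow_inv; field;
        repeat split; try lra; apply pow_nonzero; lra).
  split.
  - apply Rdiv_nonneg; lra.
  - apply Rdiv_le_compat; lra.
Qed.

End Dynamics.

Lemma Un_cv_geometric_bound (u : nat -> R) (C r : R) :
  0 < C -> 0 <= r < 1 ->
  (forall n, 0 <= u n <= C * r ^ (n - 1)) -> Un_cv u 0.
Proof.
  intros HC Hr Hu ep Hep.
  assert (Hr_abs : Rabs r < 1) by (rewrite Rabs_right; lra).
  destruct (pow_lt_1_zero r Hr_abs (ep / C)) as [N HN];
    [apply Rdiv_lt_0_compat; lra|].
  exists (S N). intros n Hn. unfold R_dist. rewrite Rminus_0_r.
  destruct (Hu n) as [Hu0 Hu1].
  assert (Hsmall : Rabs (r ^ (n - 1)) < ep / C) by (apply HN; lia).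
  rewrite Rabs_right in Hsmall by (apply Rle_ge, pow_le; lra).
  apply Rmult_lt_compat_l with (r := C) in Hsmall; [|lra].
  replace (C * (ep / C)) with ep in Hsmall by (field; lra).
  rewrite Rabs_right; lra.
Qed.

Theorem theorem2 (y eta f tau Wu0 Wa0 sigma eps : R) :
  0 < y -> 0 < eta -> 0 < f < 1 -> 0 < tau ->
  0 < sigma < 1 / 2 ->
  eps < (y * f + f ^ 2 * eta) / (eta * (1 - f)) ->
  Wa0 < sigma * Wu0 ->
  f < (1 - sigma - eps) / (1 + sigma) ->
  Wa0 > y ^ 2 / (eta * eps) ->
  tau < eps * Wu0 ->
  Wu0 > tau / (1 - sigma * f) ->
  Un_cv (frontrun_fraction y eta f tau Wu0 Wa0) 0.
Proof.
  intros Hy Heta Hf Htau Hsigma _ HWa0_share Hf_rate HWa0_big HWu0_tau HWu0_big.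
  assert (HWu0 : 0 < Wu0).
  { assert (0 < tau / (1 - sigma * f)) by (apply Rdiv_lt_0_compat; nra). lra. }
  assert (Heps : 0 < eps) by nra.
  assert (HWa0 : 0 < Wa0).
  { assert (0 < y ^ 2 / (eta * eps)) by (apply Rdiv_lt_0_compat; nra). lra. }
  assert (Hrate : f * (1 + sigma) < 1 - sigma - eps).
  { apply Rmult_lt_compat_r with (r := 1 + sigma) in Hf_rate; [|lra].
    replace ((1 - sigma - eps) / (1 + sigma) * (1 + sigma)) with (1 - sigma - eps)
      in Hf_rate by (field; lra). lra. }
  destruct (growth_factors y eta f sigma eps Hy Heta Hf (proj1 Hsigma) Hrate) as [Ha Hab].
  apply Un_cv_geometric_bound
    with (C := Wa0 / (Wu0 * (1 - eps)))
         (r := (1 + f * eta / y) / (1 + eta / y * (1 - f * sigma - eps))).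
  - apply Rdiv_lt_0_compat; nra.
  - split; [apply Rdiv_nonneg; lra|].
    apply Rmult_lt_reg_r with (1 + eta / y * (1 - f * sigma - eps)); [lra|].
    unfold Rdiv at 1. rewrite Rmult_assoc, Rinv_l by lra. lra.
  - apply frontrun_fraction_bound with (sigma := sigma); lra.
Qed.
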